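(* Any streaming algorithm (possibly randomized, succeeding with constant probability) for the $k$-connectivity augmentation problem with unweighted links in the fully streaming model, even when $k$ is known, that approximates the optimal solution to any finite factor requires $\Omega(nk)$ bits of space.
   Context: $k$-connectivity augmentation problem: given a $(k-1)$-edge-connected $n$-vertex graph $G=(V,E)$ (possibly with parallel edges) and a set of links $L\subseteq\binom{V}{2}$, find a minimum-cardinality $S\subseteq L$ such that $(V,E\cup S)$ is $k$-edge-connected. Fully streaming model: the edges of $E$ and the links of $L$ arrive in a single stream in an arbitrary interleaved order, and all storage counts toward space. *)

From HB Require Import structures.
From Stdlib Require Import Rdefinitions.
From mathcomp Require Import all_boot all_order all_algebra.
From mathcomp Require Import Rstruct.
Set Implicit Arguments. Unset Strict Implicit. Unset Printing Implicit Defensive.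
Import Order.TTheory GRing.Theory Num.Theory.

(* Vertex set V = 'I_n.  A stream item is (true, (u,v)) for an edge of E
   (parallel edges = repeated items) or (false, (u,v)) for a link of L. *)
Definition item (n : nat) : Type := (bool * ('I_n * 'I_n))%type.

Definition npair n (u v : 'I_n) : 'I_n * 'I_n :=
  if (u <= v)%N then (u, v) else (v, u).

Definition stream_edges n (st : seq (item n)) : seq ('I_n * 'I_n) :=
  [seq x.2 | x <- st & x.1].

Definition stream_links n (st : seq (item n)) : seq ('I_n * 'I_n) :=
  [seq npair x.2.1 x.2.2 | x <- st & ~~ x.1].

Definition cut_size n (X : {set 'I_n}) (es : seq ('I_n * 'I_n)) : nat :=
  count (fun e => (e.1 \in X) != (e.2 \in X)) es.

Definition k_edge_connected n (k : nat) (es : seq ('I_n * 'I_n)) : bool :=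
  [forall X : {set 'I_n}, (X != set0) && (X != [set: 'I_n]) ==> (k <= cut_size X es)%N].

Definition valid_instance n (k : nat) (st : seq (item n)) : Prop :=
  all (fun x => x.2.1 != x.2.2) st /\ uniq (stream_links st) /\
  k_edge_connected (k - 1) (stream_edges st).

Definition feasible_aug n (k : nat) (st : seq (item n)) (S : {set 'I_n * 'I_n}) : bool :=
  (S \subset [set e | e \in stream_links st]) &&
  k_edge_connected k (stream_edges st ++ enum S).

Definition approx_solution n (k alpha : nat) (st : seq (item n)) (S : {set 'I_n * 'I_n}) : bool :=
  feasible_aug k st S &&
  [forall T : {set 'I_n * 'I_n}, feasible_aug k st T ==> (#|S| <= alpha * #|T|)%N].

(* Deterministic streaming algorithm with memory of exactly s bits
   (state = s-bit string), arbitrary (non-uniform) transition and output maps. *)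
Record stream_alg (n s : nat) := StreamAlg {
  sa_init : s.-tuple bool;
  sa_step : item n -> s.-tuple bool -> s.-tuple bool;
  sa_out  : s.-tuple bool -> {set 'I_n * 'I_n}
}.

Definition run_alg n s (A : stream_alg n s) (st : seq (item n)) : {set 'I_n * 'I_n} :=
  sa_out A (foldl (fun m x => sa_step A x m) (sa_init A) st).

Definition is_distr (Omega : finType) (mu : Omega -> R) : Prop :=
  (forall w, (0 <= mu w)%R) /\ (\sum_(w : Omega) mu w = 1)%R.

Definition prob (Omega : finType) (mu : Omega -> R) (P : pred Omega) : R :=
  (\sum_(w : Omega | P w) mu w)%R.

From HB Require Import structures.
From Stdlib Require Import Rdefinitions.
From mathcomp Require Import all_boot all_order all_algebra.
From mathcomp Require Import Rstruct.
From mathcomp Require Import zify lra.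
Import Order.TTheory GRing.Theory Num.Theory.
Set Implicit Arguments. Unset Strict Implicit. Unset Printing Implicit Defensive.

(* A reduction from one-way INDEX.  Let J index the edges a_j b_j of B
   disjoint copies of K_{d,d}, d = ceil(k/2), on the non-hub vertices, so that
   |J| ~ nk/4.  A string x in {0,1}^J is streamed as the edge a_j b_j when
   x_j = 1 and as the two edges a_j h, b_j h to the hub h when x_j = 0.  To
   query slot i one appends k parallel copies of a_i b_i and of every edge h z
   with z outside {a_i, b_i, h}, copies of a_i h bringing the cut {a_i, b_i} to
   k + 1 - 2 x_i, and the single link a_i h.  All other cuts carry at least k
   edges, so the instance is (k-1)-edge-connected and the link is needed iff
   x_i = 1: a finite-factor approximation is non-empty iff x_i = 1.  For a good
   fixed seed, the s-bit memory state after the x-part thus determines 2/3 of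
   the bits of x on average, and a weighted count of the words close to the
   2^s possible decodings forces s = Omega(|J|). *)

Lemma sum_nat_boolE (I : finType) (P : pred I) : \sum_i (P i : nat) = #|P|.
Proof.
by rewrite -sum1_card [RHS]big_mkcond; apply: eq_bigr => i _; rewrite unfold_in; case: (P i).
Qed.

Lemma prod_nat_if (I : finType) (P : pred I) (u v : nat) :
  \prod_i (if P i then u else v) = u ^ #|P| * v ^ #|predC P|.
Proof.
rewrite (bigID P) /= -!prod_nat_const.
by congr (_ * _); apply: eq_bigr => i; case: (P i).
Qed.

Lemma leq_wexp2r m n e : m <= n -> m ^ e <= n ^ e.
Proof. by move=> le_mn; elim: e => // e IH; rewrite !expnS leq_mul. Qed.

Section HammingBall.
Variables (J S : finType) (enc : {ffun J -> bool} -> S) (dec : S -> J -> bool).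

Definition errors x := #|[pred j | dec (enc x) j != x j]|.
Definition hits x := \sum_j (dec (enc x) j == x j : nat).

Lemma hitsE x : hits x = #|J| - errors x.
Proof.
rewrite /hits sum_nat_boolE -(cardC [pred j | dec (enc x) j == x j]) /errors addnK.
by apply: eq_card => j; rewrite !inE.
Qed.

Lemma sum_hits_le t :
  \sum_x hits x <= #|[pred x | errors x <= t]| * #|J| + 2 ^ #|J| * (#|J| - t).
Proof.
have hits_le x : hits x <= (errors x <= t) * #|J| + (#|J| - t).
  rewrite hitsE; case: (leqP (errors x) t) => /= [_|lt_t].
    by rewrite mul1n (leq_trans (leq_subr _ _) (leq_addr _ _)).
  by rewrite add0n leq_sub2l // ltnW.
apply: (@leq_trans (\sum_x ((errors x <= t) * #|J| + (#|J| - t)))); first exact: leq_sum.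
by rewrite big_split /= -big_distrl sum_nat_boolE sum_nat_const card_ffun card_bool.
Qed.

(* Weighting the words y by 2 per disagreement and 3 per agreement with a fixed
   word gives total weight 5^|J|, and weight at least 2^t 3^(|J|-t) to each y
   within distance t of it. *)
Lemma card_few_errors t : t <= #|J| ->
  #|[pred x | errors x <= t]| * (2 ^ t * 3 ^ (#|J| - t)) <= #|S| * 5 ^ #|J|.
Proof.
move=> le_t.
pose weight (c : J -> bool) (x : {ffun J -> bool}) := \prod_j (if c j != x j then 2 else 3).
have weight_sum c : \sum_x weight c x = 5 ^ #|J|.
  rewrite -(bigA_distr_bigA (fun j y => if c j != y then 2 else 3)) /=.
  by rewrite -prod_nat_const; apply: eq_bigr => j _; rewrite big_bool; case: (c j).
have weight_ge x : errors x <= t -> 2 ^ t * 3 ^ (#|J| - t) <= weight (dec (enc x)) x.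
  move=> le_e; rewrite /weight prod_nat_if.
  have -> : #|predC (fun j => dec (enc x) j != x j)| = #|J| - errors x.
    by rewrite -(cardC [pred j | dec (enc x) j != x j]) addKn.
  have -> : 2 ^ t = 2 ^ errors x * 2 ^ (t - errors x) by rewrite -expnD subnKC.
  have -> : 3 ^ (#|J| - errors x) = 3 ^ (t - errors x) * 3 ^ (#|J| - t).
    by rewrite -expnD; congr (_ ^ _); lia.
  by rewrite -mulnA leq_mul // leq_mul // leq_wexp2r.
apply: (@leq_trans (\sum_(x | errors x <= t) weight (dec (enc x)) x)).
  by rewrite -sum_nat_const; apply: leq_sum.
apply: (@leq_trans (\sum_x weight (dec (enc x)) x)).
  by rewrite [X in _ <= X](bigID (fun x => errors x <= t)) leq_addr.
apply: (@leq_trans (\sum_x \sum_(c : S) weight (dec c) x)).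
  by apply: leq_sum => x _; rewrite (bigD1 (enc x)) //= leq_addr.
by rewrite exchange_big /= (eq_bigr _ (fun c _ => weight_sum (dec c))) sum_nat_const.
Qed.

(* With t = 2q: 3456 = 2^5 * 2^2 * 3^3 and 3125 = 5^5. *)
Lemma index_lower_bound q : 0 < q -> #|J| = 5 * q ->
  2 * #|J| * 2 ^ #|J| <= 3 * \sum_x hits x -> 3456 ^ q <= 15 * #|S| * 3125 ^ q.
Proof.
move=> q_gt0 card_J many_hits.
have le_2q : 2 * q <= #|J| by rewrite card_J leq_mul2r orbT.
have ball := card_few_errors le_2q.
have := leq_trans many_hits (leq_mul (leqnn 3) (sum_hits_le (2 * q))).
set few := #|[pred x | errors x <= 2 * q]|; rewrite card_J => many_few.
have few_large : 2 ^ #|J| <= 15 * few.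
  by rewrite card_J -(leq_pmul2l q_gt0); set P := 2 ^ _ in many_few *; nia.
have -> : 3125 ^ q = 5 ^ #|J| by rewrite card_J expnM.
have -> : 3456 ^ q = 2 ^ #|J| * (2 ^ (2 * q) * 3 ^ (#|J| - 2 * q)).
  by rewrite card_J -mulnBl !expnM -!expnMn.
apply: leq_trans (leq_mul few_large (leqnn _)) _.
by rewrite -!mulnA leq_mul2l ball orbT.
Qed.

End HammingBall.

Lemma expn_gap_bound u v q s : 0 < u -> u <= v -> 2 * u ^ 7 <= v ^ 7 ->
  v ^ q <= 15 * 2 ^ s * u ^ q -> q < 7 * (s + 4).
Proof.
move=> u_gt0 le_uv gap7 le_pow.
have powE c : c ^ q = (c ^ 7) ^ (q %/ 7) * c ^ (q %% 7).
  by rewrite -expnM -expnD mulnC -divn_eq.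
have gap : 2 ^ (q %/ 7) * u ^ q <= v ^ q.
  by rewrite !powE mulnA -expnMn leq_mul ?leq_wexp2r.
have : 2 ^ (q %/ 7) < 2 ^ (s + 4).
  have := leq_trans gap le_pow; rewrite leq_pmul2r ?expn_gt0 ?u_gt0 // => le_s.
  by apply: leq_ltn_trans le_s _; rewrite expnD mulnC ltn_pmul2l ?expn_gt0.
rewrite ltn_exp2l // => lt_s.
by rewrite (divn_eq q 7); lia.
Qed.

Lemma exists_good_seed (Omega P : finType) (mu : Omega -> R) (good : Omega -> pred P) :
  is_distr mu -> (forall p, 2%:R / 3%:R <= prob mu (good^~ p))%R ->
  exists w, 2 * #|P| <= 3 * \sum_p good w p.
Proof.
move=> [mu_ge0 mu_sum1] good_whp.
pose T w := \sum_p (good w p : nat).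
case: (pickP (fun w => 2 * #|P| <= 3 * T w)) => [w ok | bad]; first by exists w.
have expectation : (\sum_p prob mu (good^~ p) = \sum_w mu w * (T w)%:R)%R.
  rewrite /prob; under eq_bigr => p _ do rewrite big_mkcond /=.
  rewrite exchange_big /=; apply: eq_bigr => w _.
  rewrite /T natr_sum big_distrr /=; apply: eq_bigr => p _.
  by case: (good w p); rewrite ?mulr1 ?mulr0.
have lower : (2%:R * #|P|%:R <= 3%:R * \sum_w mu w * (T w)%:R :> R)%R.
  have sum_whp : (\sum_(p : P) 2%:R / 3%:R <= \sum_p prob mu (good^~ p) :> R)%R.
    exact: ler_sum.
  by move: sum_whp; rewrite -expectation sumr_const -mulr_natl; lra.
have upper : (\sum_w mu w * (3 * T w).+1%:R <= (2 * #|P|)%:R :> R)%R.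
  apply: (@le_trans _ _ (\sum_w mu w * (2 * #|P|)%:R)%R).
    by apply: ler_sum => w _; rewrite ler_wpM2l // ler_nat ltnNge bad.
  by rewrite -big_distrl /= mu_sum1 mul1r.
move: upper; under eq_bigr => w _ do rewrite -nat1r natrM mulrDr mulr1 mulrCA.
by rewrite big_split /= mu_sum1 -big_distrr /= natrM; lra.
Qed.

Definition copies T (m : nat) (s : seq T) : seq T := flatten (nseq m s).

Lemma mem_copies (T : eqType) m (s : seq T) y : y \in copies m s -> y \in s.
Proof. by case/flattenP => s' /nseqP [-> _]. Qed.

Section Cuts.
Variables (n : nat) (X : {set 'I_n}).
Implicit Types es : seq ('I_n * 'I_n).

Lemma cut_size_cat es1 es2 : cut_size X (es1 ++ es2) = cut_size X es1 + cut_size X es2.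
Proof. exact: count_cat. Qed.

Lemma cut_size_copies m es : cut_size X (copies m es) = m * cut_size X es.
Proof. by rewrite /cut_size /copies count_flatten map_nseq sumn_nseq mulnC. Qed.

Lemma cut_sizeC es : cut_size (~: X) es = cut_size X es.
Proof. by apply: eq_count => e; rewrite !inE; case: (e.1 \in X); case: (e.2 \in X). Qed.

Lemma cut_size_npair u v : cut_size X [:: npair u v] = cut_size X [:: (u, v)].
Proof. by rewrite /npair; case: ifP => //= _; rewrite /cut_size /= eq_sym. Qed.

End Cuts.

Definition edge_items n (es : seq ('I_n * 'I_n)) : seq (item n) := [seq (true, e) | e <- es].

Lemma stream_edges_cat n (s1 s2 : seq (item n)) :
  stream_edges (s1 ++ s2) = stream_edges s1 ++ stream_edges s2.
Proof. by rewrite /stream_edges filter_cat map_cat. Qed.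

Lemma stream_links_cat n (s1 s2 : seq (item n)) :
  stream_links (s1 ++ s2) = stream_links s1 ++ stream_links s2.
Proof. by rewrite /stream_links filter_cat map_cat. Qed.

Lemma stream_edges_items n (es : seq ('I_n * 'I_n)) : stream_edges (edge_items es) = es.
Proof. by elim: es => //= e es IH; rewrite -{2}IH. Qed.

Lemma stream_links_items n (es : seq ('I_n * 'I_n)) : stream_links (edge_items es) = [::].
Proof. by rewrite /stream_links filter_map /= filter_pred0. Qed.

Definition solves_whp n k alpha s (Omega : finType) (mu : Omega -> R)
    (A : Omega -> stream_alg n s) : Prop :=
  forall st : seq (item n), valid_instance k st -> (exists S, feasible_aug k st S) ->
    (2%:R / 3%:R <= prob mu (fun w => approx_solution k alpha st (run_alg (A w) st)))%R.

Section IndexInstance.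
Variables (n k : nat) (J : finType) (hub : 'I_n) (a b : J -> 'I_n).
Hypothesis a_neq_hub : forall j, a j != hub.
Hypothesis b_neq_hub : forall j, b j != hub.
Hypothesis a_neq_b : forall i j, a i != b j.
Hypothesis ab_inj : forall i j, a i = a j -> b i = b j -> i = j.

Definition fiber i := #|[pred j | a j == a i]| + #|[pred j | b j == b i]|.
Hypothesis fiber_le : forall i, fiber i <= k.+1.
Hypothesis k_gt0 : 0 < k.

Definition slot_cut i : {set 'I_n} := [set a i; b i].

Definition slot_edges j (bit : bool) : seq ('I_n * 'I_n) :=
  if bit then [:: (a j, b j)] else [:: (a j, hub); (b j, hub)].

Definition prefix_edges (x : {ffun J -> bool}) : seq ('I_n * 'I_n) :=
  flatten [seq slot_edges j (x j) | j <- enum J].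

Definition spokes i : seq ('I_n * 'I_n) :=
  (a i, b i) :: [seq (hub, z) | z <- enum 'I_n & z \notin hub |: slot_cut i].

Definition query_edges i : seq ('I_n * 'I_n) :=
  copies k (spokes i) ++ copies (k.+1 - fiber i) [:: (a i, hub)].

Definition instance_edges x i := prefix_edges x ++ query_edges i.

Definition instance x i : seq (item n) :=
  edge_items (prefix_edges x) ++ edge_items (query_edges i) ++ [:: (false, (a i, hub))].

Lemma a_in_slot_cut i j : (a j \in slot_cut i) = (a j == a i).
Proof. by rewrite !inE (negbTE (a_neq_b j i)) orbF. Qed.

Lemma b_in_slot_cut i j : (b j \in slot_cut i) = (b j == b i).
Proof. by rewrite !inE eq_sym (negbTE (a_neq_b i j)). Qed.

Lemma hub_notin_slot_cut i : hub \notin slot_cut i.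
Proof. by rewrite !inE !(eq_sym hub) negb_or a_neq_hub b_neq_hub. Qed.

Lemma slot_cut_neq0 i : slot_cut i != set0.
Proof. by apply/set0Pn; exists (a i); rewrite a_in_slot_cut. Qed.

Lemma slot_cut_neqT i : slot_cut i != setT.
Proof. by apply: contraNneq (hub_notin_slot_cut i) => ->; rewrite inE. Qed.

Lemma cut_slot_edges i j bit :
  cut_size (slot_cut i) (slot_edges j bit) + 2 * (bit && (j == i)) = (a j == a i) + (b j == b i).
Proof.
rewrite /cut_size /slot_edges; case: bit => /=;
  rewrite ?(negbTE (hub_notin_slot_cut i)) a_in_slot_cut b_in_slot_cut; last first.
  by case: (a j == a i); case: (b j == b i).
have [->|neq_ji] := eqVneq j i; first by rewrite !eqxx.
case: (a j =P a i) => [eq_a|]; case: (b j =P b i) => [eq_b|] //=.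
by rewrite (ab_inj eq_a eq_b) eqxx in neq_ji.
Qed.

Lemma cut_prefix_edges x i : cut_size (slot_cut i) (prefix_edges x) + 2 * x i = fiber i.
Proof.
have cutE : cut_size (slot_cut i) (prefix_edges x) =
    \sum_j cut_size (slot_cut i) (slot_edges j (x j)).
  by rewrite /cut_size count_flatten sumnE big_map big_map big_enum.
have bitE : x i = \sum_j (x j && (j == i)) :> nat.
  by rewrite (bigD1 i) //= eqxx andbT big1 ?addn0 // => j /negbTE ->; rewrite andbF.
rewrite cutE bitE big_distrr -big_split /=.
under eq_bigr => j _ do rewrite cut_slot_edges.
by rewrite big_split /= !sum_nat_boolE.
Qed.

Lemma cut_spokes_slot i : cut_size (slot_cut i) (spokes i) = 0.
Proof.
rewrite /cut_size /= a_in_slot_cut b_in_slot_cut !eqxx add0n count_map.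
apply/eqP; rewrite -leqn0 leqNgt -has_count; apply/hasPn => z.
rewrite mem_filter in_setU1 negb_or => /andP [/andP [_ /negbTE notin_slot] _] /=.
by rewrite (negbTE (hub_notin_slot_cut i)) notin_slot.
Qed.

Lemma cut_query_slot i : cut_size (slot_cut i) (query_edges i) = k.+1 - fiber i.
Proof.
rewrite /query_edges cut_size_cat !cut_size_copies cut_spokes_slot muln0.
by rewrite /cut_size /= a_in_slot_cut eqxx (negbTE (hub_notin_slot_cut i)) muln1.
Qed.

Lemma cut_spokes_gt0 i X : X != set0 -> X != setT -> X != slot_cut i -> ~: X != slot_cut i ->
  0 < cut_size X (spokes i).
Proof.
move=> X_neq0 X_neqT X_neq_slot CX_neq_slot.
rewrite /cut_size -has_count /= has_map; apply/norP => -[/negPn/eqP eq_ab /hasPn same].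
have memX z : (z \in X) = if z \in slot_cut i then a i \in X else hub \in X.
  case: ifP => [|notin_slot]; first by rewrite !inE => /orP [] /eqP ->.
  have [-> //|neq_hub] := eqVneq z hub.
  apply/eqP; rewrite eq_sym; apply/negPn.
  by apply: same; rewrite mem_filter in_setU1 negb_or neq_hub notin_slot mem_enum inE.
have := memX; case: (a i \in X); case: (hub \in X) => memX'.
- by apply: (negP X_neqT); apply/eqP/setP => z; rewrite memX' in_setT; case: ifP.
- by apply: (negP X_neq_slot); apply/eqP/setP => z; rewrite memX'; case: ifP.
- by apply: (negP CX_neq_slot); apply/eqP/setP => z; rewrite in_setC memX'; case: ifP.
- by apply: (negP X_neq0); apply/eqP/setP => z; rewrite memX' in_set0; case: ifP.
Qed.

Lemma cut_instance_slot x i : cut_size (slot_cut i) (instance_edges x i) = k.+1 - 2 * x i.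
Proof.
rewrite cut_size_cat cut_query_slot; have := cut_prefix_edges x i; have := fiber_le i; lia.
Qed.

Lemma cut_instance_other x i X : X != set0 -> X != setT -> X != slot_cut i -> ~: X != slot_cut i ->
  k <= cut_size X (instance_edges x i).
Proof.
move=> *; rewrite /instance_edges /query_edges !cut_size_cat cut_size_copies addnA.
rewrite (leq_trans _ (leq_addr _ _)) // (leq_trans _ (leq_addl _ _)) //.
by rewrite leq_pmulr ?cut_spokes_gt0.
Qed.

Lemma instance_connected m (x : {ffun J -> bool}) i extra : m <= k ->
  m <= k.+1 - 2 * x i + cut_size (slot_cut i) extra ->
  k_edge_connected m (instance_edges x i ++ extra).
Proof.
move=> le_mk le_m_slot; apply/forallP => X; apply/implyP => /andP [X_neq0 X_neqT].
have [->|X_neq_slot] := eqVneq X (slot_cut i); first by rewrite cut_size_cat cut_instance_slot.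
have [CX_eq|CX_neq_slot] := eqVneq (~: X) (slot_cut i).
  by rewrite -cut_sizeC CX_eq cut_size_cat cut_instance_slot.
rewrite cut_size_cat; apply: leq_trans (leq_addr _ _).
exact: leq_trans le_mk (cut_instance_other x X_neq0 X_neqT X_neq_slot CX_neq_slot).
Qed.

Lemma stream_edges_instance x i : stream_edges (instance x i) = instance_edges x i.
Proof. by rewrite !stream_edges_cat !stream_edges_items cats0. Qed.

Lemma stream_links_instance x i : stream_links (instance x i) = [:: npair (a i) hub].
Proof. by rewrite !stream_links_cat !stream_links_items. Qed.

Lemma instance_loopless x i : all (fun it : item n => it.2.1 != it.2.2) (instance x i).
Proof.
rewrite !all_cat /= a_neq_hub !andbT !all_map; apply/andP; split; apply/allP => e.
  case/flattenP => _ /mapP [j _ ->]; rewrite /slot_edges.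
  case: (x j); rewrite !inE; first by move/eqP ->; exact: a_neq_b.
  by case/orP => /eqP ->; [exact: a_neq_hub | exact: b_neq_hub].
rewrite mem_cat => /orP [] /mem_copies; last by rewrite inE => /eqP ->; exact: a_neq_hub.
rewrite inE => /predU1P [-> | /mapP [z]] /=; first exact: a_neq_b.
by rewrite mem_filter in_setU1 negb_or => /andP [/andP [z_neq_hub _] _] ->; rewrite eq_sym.
Qed.

Lemma instance_valid x i : valid_instance k (instance x i).
Proof.
split; [exact: instance_loopless | split; first by rewrite stream_links_instance].
rewrite stream_edges_instance -[instance_edges x i]cats0.
by apply: instance_connected; case: (x i); lia.
Qed.

Lemma feasible_link x i : feasible_aug k (instance x i) [set npair (a i) hub].
Proof.
rewrite /feasible_aug stream_links_instance stream_edges_instance enum_set1.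
apply/andP; split; first by apply/subsetP => e; rewrite !inE.
apply: instance_connected => //.
rewrite cut_size_npair /cut_size /= a_in_slot_cut eqxx (negbTE (hub_notin_slot_cut i)).
by case: (x i); lia.
Qed.

Lemma feasible_set0 x i : feasible_aug k (instance x i) set0 = ~~ x i.
Proof.
rewrite /feasible_aug sub0set enum_set0 cats0 stream_edges_instance /=.
case xi: (x i) => /=.
  apply/negP => /forallP /(_ (slot_cut i)).
  by rewrite slot_cut_neq0 slot_cut_neqT cut_instance_slot xi /=; lia.
by rewrite -[instance_edges x i]cats0 instance_connected // xi /=; lia.
Qed.

Lemma approx_solution_instance alpha x i S :
  approx_solution k alpha (instance x i) S -> (S != set0) = x i.
Proof.
case/andP => feasible_S /forallP /(_ set0); rewrite feasible_set0.
case xi: (x i) => /=.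
  by move=> _; apply: contraTneq feasible_S => ->; rewrite feasible_set0 xi.
by rewrite cards0 muln0 leqn0 cards_eq0 => /eqP ->; rewrite eqxx.
Qed.

Lemma index_reduction alpha s (Omega : finType) (mu : Omega -> R) (A : Omega -> stream_alg n s) :
  is_distr mu -> solves_whp k alpha mu A ->
  exists (enc : {ffun J -> bool} -> s.-tuple bool) (dec : s.-tuple bool -> J -> bool),
    2 * #|J| * 2 ^ #|J| <= 3 * \sum_x hits enc dec x.
Proof.
move=> mu_distr A_whp.
pose good w (p : {ffun J -> bool} * J) :=
  approx_solution k alpha (instance p.1 p.2) (run_alg (A w) (instance p.1 p.2)).
have [w good_w] : exists w, 2 * #|{: {ffun J -> bool} * J}| <= 3 * \sum_p good w p.
  apply: exists_good_seed mu_distr _ => -[x i].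
  apply: A_whp; first exact: instance_valid.
  by exists [set npair (a i) hub]; apply: feasible_link.
pose step m y := sa_step (A w) y m.
exists (fun x => foldl step (sa_init (A w)) (edge_items (prefix_edges x))).
exists (fun m i => sa_out (A w)
  (foldl step m (edge_items (query_edges i) ++ [:: (false, (a i, hub))])) != set0).
have -> : 2 * #|J| * 2 ^ #|J| = 2 * #|{: {ffun J -> bool} * J}|.
  by rewrite card_prod card_ffun card_bool mulnAC mulnA.
apply: leq_trans good_w _; rewrite leq_mul2l /hits pair_big /=.
apply: leq_sum => -[x i] _; case: (boolP (good w (x, i))) => //= /approx_solution_instance <-.
by rewrite /run_alg /instance (foldl_cat _ _ (edge_items (prefix_edges x))) eqxx.
Qed.

End IndexInstance.

Section Blocks.
Variables (N B d : nat).
Hypothesis blocks_fit : 2 * d * B <= N.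

Lemma card_block_vertices : #|{: 'I_B * bool * 'I_d}| <= N.
Proof. by rewrite !card_prod !card_ord card_bool; nia. Qed.

Definition block_vertex (v : 'I_B * bool * 'I_d) : 'I_N.+1 :=
  lift ord0 (widen_ord card_block_vertices (enum_rank v)).

Lemma block_vertex_inj : injective block_vertex.
Proof. by move=> u v /lift_inj /(congr1 val) /= /val_inj /enum_rank_inj. Qed.

Lemma block_vertex_neq0 v : block_vertex v != ord0.
Proof. by rewrite eq_sym neq_lift. Qed.

Definition block_a (j : 'I_B * ('I_d * 'I_d)) := block_vertex (j.1, false, j.2.1).
Definition block_b (j : 'I_B * ('I_d * 'I_d)) := block_vertex (j.1, true, j.2.2).

Lemma block_a_neq_b i j : block_a i != block_b j.
Proof. by apply/eqP => /block_vertex_inj. Qed.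

Lemma block_ab_inj i j : block_a i = block_a j -> block_b i = block_b j -> i = j.
Proof.
by move: i j => [i [u v]] [j [u' v']] /block_vertex_inj [-> ->] /block_vertex_inj [->].
Qed.

Lemma block_fiber_le i : fiber block_a block_b i <= 2 * d.
Proof.
have le_d (P : pred ('I_B * ('I_d * 'I_d))) (f : _ -> 'I_d) : {in P &, injective f} -> #|P| <= d.
  by move/leq_card_in; rewrite card_ord.
rewrite /fiber mul2n -addnn; apply: leq_add;
  [apply: (le_d _ (fun j => j.2.2)) | apply: (le_d _ (fun j => j.2.1))];
  move=> [j [u v]] [j' [u' v']]; rewrite !inE /= => /eqP/block_vertex_inj [-> ->];
  by move=> /eqP/block_vertex_inj [-> ->] ->.
Qed.

End Blocks.

Lemma augmentation_space_lower_bound n k alpha s (Omega : finType) (mu : Omega -> R)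
    (A : Omega -> stream_alg n s) :
  4480 <= n -> 0 < k -> 20 * k <= n -> is_distr mu -> solves_whp k alpha mu A ->
  n * k <= 1120 * s.
Proof.
case: n A => [//|N] A le_n k_gt0 le_kn mu_distr A_whp.
set d := k.+1 %/ 2; set L := N %/ (10 * d).
have [d_gt0 le_dk le_kd] : [/\ 0 < d, 2 * d <= k.+1 & k <= 2 * d] by rewrite /d; split; lia.
have L_gt0 : 0 < L by rewrite divn_gt0; lia.
have fit : 2 * d * (5 * L) <= N by have := leq_divM N (10 * d); rewrite -/L; lia.
have le_nk : N.+1 * k <= 40 * (L * d * d).
  have := ltn_ceil N (_ : 0 < 10 * d); rewrite -/L muln_gt0 d_gt0 => /(_ isT) lt_N; nia.
have [enc [dec many_hits]] := index_reduction (fun j => block_vertex_neq0 fit _)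
  (fun j => block_vertex_neq0 fit _) (@block_a_neq_b _ _ _ fit) (@block_ab_inj _ _ _ fit)
  (fun i => leq_trans (block_fiber_le fit i) le_dk) k_gt0 mu_distr A_whp.
have card_J : #|{: 'I_(5 * L) * ('I_d * 'I_d)}| = 5 * (L * d * d).
  by rewrite !card_prod !card_ord !mulnA.
have q_gt0 : 0 < L * d * d by rewrite !muln_gt0 L_gt0 d_gt0.
have := index_lower_bound q_gt0 card_J many_hits.
have gap7 : 2 * 3125 ^ 7 <= 3456 ^ 7 by lia.
rewrite card_tuple card_bool => /(@expn_gap_bound 3125 3456 _ _ isT isT gap7).
(* n k <= 40 q < 280 (s + 4), and n >= 4480 forces q >= 112, hence s >= 13. *)
lia.
Qed.

Theorem mainTheorem9 :
  forall alpha : nat, (1 <= alpha)%N ->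
  exists C : R, (0 < C)%R /\
  exists c : R, (0 < c)%R /\
  exists N0 : nat,
  forall n k : nat, (N0 <= n)%N -> (1 <= k)%N -> (k%:R <= c * n%:R)%R ->
  forall (s : nat) (Omega : finType) (mu : Omega -> R) (A : Omega -> stream_alg n s),
    is_distr mu ->
    (forall st : seq (item n),
        valid_instance k st ->
        (exists S, feasible_aug k st S) ->
        (2%:R / 3%:R <= prob mu (fun w => approx_solution k alpha st (run_alg (A w) st)))%R) ->
    (C * n%:R * k%:R <= s%:R)%R.
Proof.
move=> alpha _; exists (1120%:R^-1)%R; split; first by rewrite invr_gt0 ltr0n.
exists (20%:R^-1)%R; split; first by rewrite invr_gt0 ltr0n.
exists 4480 => n k le_n k_gt0 le_kn s Omega mu A mu_distr A_whp.
have le_kn_nat : (20 * k <= n)%N by rewrite -(ler_nat R) natrM; lra.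
have := augmentation_space_lower_bound le_n k_gt0 le_kn_nat mu_distr A_whp.
by rewrite -(ler_nat R) !natrM; lra.
Qed.
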